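(* Let $R$ be a noncommutative finite-dimensional division algebra over a field $F$ and let $p\in F[x]$ be a nonconstant polynomial. Then $R$ is generated as an $F$-algebra by the set $p[R,R]=\{p(ab)-p(ba)\mid a,b\in R\}$. *)

From mathcomp Require Import all_boot all_order all_algebra all_field.
Set Implicit Arguments. Unset Strict Implicit. Unset Printing Implicit Defensive.
Import GRing.Theory.
Local Open Scope ring_scope.

Definition is_subalgebra (F : fieldType) (R : falgType F) (S : R -> Prop) : Prop :=
  [/\ S 1,
      (forall x y, S x -> S y -> S (x + y)),
      (forall (c : F) x, S x -> S (c *: x)) &
      (forall x y, S x -> S y -> S (x * y))].

Definition generates_algebra (F : fieldType) (R : falgType F) (T : R -> Prop) : Prop :=
  forall S : R -> Prop, is_subalgebra S -> (forall x, T x -> S x) -> forall x, S x.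

Definition peval (F : fieldType) (R : falgType F) (p : {poly F}) (a : R) : R :=
  (map_poly (in_alg R) p).[a].

Definition pcomm_set (F : fieldType) (R : falgType F) (p : {poly F}) : R -> Prop :=
  fun x => exists a b : R, x = peval p (a * b) - peval p (b * a).

From HB Require Import structures.
From Stdlib Require Import Classical.
From mathcomp Require Import all_boot all_order all_algebra all_field.
Set Implicit Arguments. Unset Strict Implicit. Unset Printing Implicit Defensive.
Import GRing.Theory.
Local Open Scope ring_scope.

(* Suppose a proper subalgebra S contains p[R,R].  As S is closed under inverses and p[R,R]
   under conjugation, a Cartan-Brauer-Hua argument makes every element of p[R,R] central,
   and since p(y) - b^-1 p(y) b lies in p[R,R], every value p(y) is central.  By Wedderburn's
   little theorem F is infinite, so comparing coefficients of c |-> p(c y) shows that y^n is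
   central for n = deg p and every y.  This is impossible in a noncommutative division
   algebra: passing to a smaller exponent i with C(n, i) <> 0 in F, we may assume all inner
   binomial coefficients of n vanish; then ad_x^n = 0, which yields u with x u - u x = 1, and
   x (u x)^n = ((u x)^n + 1) x contradicts the centrality of (u x)^n. *)

Definition central (A : pzRingType) (x : A) := forall y : A, GRing.comm x y.

Section Peval.
Variables (F : fieldType) (R : falgType F).

Lemma pevalE (p : {poly F}) (y : R) : peval p y = \sum_(i < size p) p`_i *: y ^+ i.
Proof.
rewrite /peval horner_coef size_map_poly; apply: eq_bigr => i _.
by rewrite coef_map /= mulr_algl.
Qed.

Lemma expr_conj (u y : R) n : u \is a GRing.unit -> (u * y / u) ^+ n = u * y ^+ n / u.
Proof.
move=> Uu; elim: n => [|n IHn]; first by rewrite !expr0 mulr1 divrr.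
by rewrite !exprS IHn !mulrA divrK.
Qed.

Lemma peval_conj (p : {poly F}) (u y : R) :
  u \is a GRing.unit -> peval p (u * y / u) = u * peval p y / u.
Proof.
move=> Uu; rewrite !pevalE mulr_sumr mulr_suml; apply: eq_bigr => i _.
by rewrite expr_conj // -scalerAr -scalerAl.
Qed.

Lemma pcomm_set_conj (p : {poly F}) (u t : R) :
  u \is a GRing.unit -> pcomm_set p t -> pcomm_set p (u * t / u).
Proof.
move=> Uu [a [b ->]]; exists (u * a / u), (u * b / u).
have conjM x y : u * x / u * (u * y / u) = u * (x * y) / u by rewrite !mulrA divrK.
by rewrite !conjM !peval_conj // mulrBr mulrBl.
Qed.

Lemma pcomm_set_peval_conj (p : {poly F}) (b y : R) :
  b \is a GRing.unit -> pcomm_set p (peval p y - b^-1 * peval p y * b).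
Proof.
move=> Ub; exists b, (b^-1 * y); rewrite mulVKr //.
have UVb : b^-1 \is a GRing.unit by rewrite unitrV.
by rewrite -{2}[b]invrK -peval_conj // invrK.
Qed.

End Peval.

Section Subalgebra.
Variables (F : fieldType) (R : falgType F) (S : R -> Prop).
Hypothesis S_subalg : is_subalgebra S.

Lemma subalg1 : S 1.
Proof. by case: S_subalg. Qed.

Lemma subalgD x y : S x -> S y -> S (x + y).
Proof. by case: S_subalg => _ SD _ _; apply: SD. Qed.

Lemma subalgZ c x : S x -> S (c *: x).
Proof. by case: S_subalg => _ _ SZ _; apply: SZ. Qed.

Lemma subalgM x y : S x -> S y -> S (x * y).
Proof. by case: S_subalg => _ _ _ SM; apply: SM. Qed.

Lemma subalg0 : S 0. Proof. by rewrite -(scale0r 1); apply/subalgZ/subalg1. Qed.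

Lemma subalgB x y : S x -> S y -> S (x - y).
Proof. by move=> Sx Sy; rewrite -scaleN1r; apply/subalgD/subalgZ. Qed.

Lemma subalgX x n : S x -> S (x ^+ n).
Proof.
move=> Sx; elim: n => [|n IHn]; first by rewrite expr0; apply: subalg1.
by rewrite exprS; apply: subalgM.
Qed.

Lemma subalg_agenv z v : S z -> v \in agenv <[z]>%VS -> S v.
Proof.
move=> Sz /memv_sumP[w w_pow ->]; apply: (big_ind S subalg0 subalgD) => i _.
have /vlineP[c ->] : w i \in <[z ^+ i]>%VS by rewrite -expv_line w_pow.
exact/subalgZ/subalgX.
Qed.

(* [agenv <[z]>] is a finite-dimensional subalgebra, hence closed under inversion. *)
Lemma subalgV z : S z -> S z^-1.
Proof.
move=> Sz; apply: (subalg_agenv Sz).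
rewrite (memvV (agenv_aspace <[z]>%VS)) /=.
exact: subvP (sub_agenv _) _ (memv_line z).
Qed.

End Subalgebra.

Section DivisionRing.
Variable D : unitRingType.
Hypothesis D_unit : forall x : D, x != 0 -> x \is a GRing.unit.

(* With [c b := z - b^-1 z b] we have [b z - z b = b c_b]; comparing [b = a] with [b = a + 1]
   writes [a] as a quotient of central elements, unless [c_a = c_(a+1)] forces [a z = z a]. *)
Lemma central_of_central_conj_diff (z : D) :
  (forall b, b \is a GRing.unit -> central (z - b^-1 * z * b)) -> central z.
Proof.
move=> cz a; pose c b := z - b^-1 * z * b.
have comm_c b : b \is a GRing.unit -> b * c b = b * z - z * b.
  by move=> Ub; rewrite mulrBr !mulrA mulrV // mul1r.
have [-> | nz_a] := eqVneq a 0; first by rewrite /GRing.comm mulr0 mul0r.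
have [a1_0 | nz_a1] := eqVneq (a + 1) 0.
  by rewrite -(addrK 1 a) a1_0 sub0r; apply: commrN1.
have [Ua Ua1] := (D_unit nz_a, D_unit nz_a1).
have c_a_a1 : a * c a = (a + 1) * c (a + 1).
  by rewrite !comm_c // mulrDl mulrDr mul1r mulr1 opprD addrACA subrr addr0.
have a_dc : a * (c a - c (a + 1)) = c (a + 1).
  by rewrite mulrBr c_a_a1 mulrDl mul1r [_ + c _]addrC addrK.
have [/subr0_eq c_eq | nz_dc] := eqVneq (c a - c (a + 1)) 0.
  have c_a0 : c a = 0 by rewrite c_eq -a_dc c_eq subrr mulr0.
  by apply/esym/eqP; rewrite -subr_eq0 -comm_c // c_a0 mulr0.
have -> : a = c (a + 1) / (c a - c (a + 1)) by rewrite -{1}a_dc mulrK ?D_unit.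
by apply: commrM; [|apply/commrV/commrB]; apply/esym/cz.
Qed.

End DivisionRing.

Section ProperSubalgebra.
Variables (F : fieldType) (R : falgType F) (S : R -> Prop).
Hypothesis S_subalg : is_subalgebra S.
Hypothesis R_unit : forall x : R, x != 0 -> x \is a GRing.unit.
Variable t : R.
Hypothesis S_conj : forall u, u \is a GRing.unit -> S (u * t / u).

Let unit_notin_subalg z : ~ S z -> z \is a GRing.unit.
Proof.
by move=> nSz; apply: R_unit; apply: contra_notN nSz => /eqP ->; apply: (subalg0 S_subalg).
Qed.

Let notin_subalgD1 z : ~ S z -> ~ S (z + 1).
Proof.
move=> nSz Sz1; apply: nSz; rewrite -(addrK 1 z).
exact: (subalgB S_subalg) (subalg1 S_subalg).
Qed.

(* With [t_b := b t b^-1] in [S] one gets [t - t_(b+1) = (t_(b+1) - t_b) b], so [b] lies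
   in [S] unless [t = t_b]. *)
Lemma subalg_conj_comm b : ~ S b -> GRing.comm t b.
Proof.
move=> nSb; have Ub := unit_notin_subalg nSb.
have Ub1 := unit_notin_subalg (notin_subalgD1 nSb).
have St : S t by have := S_conj (unitr1 R); rewrite mul1r divr1.
set t1 := b * t / b; set t2 := (b + 1) * t / (b + 1).
have t1b : t1 * b = b * t by rewrite divrK.
have t2b : t2 * b + t2 = b * t + t.
  have : t2 * (b + 1) = (b + 1) * t by rewrite divrK.
  by rewrite mulrDr mulr1 mulrDl mul1r.
have t_t2 : t - t2 = (t2 - t1) * b.
  by rewrite mulrBl t1b -[t2 * b](addrK t2) t2b addrAC [b * t + t]addrC addrK.
have [/subr0_eq t21 | nz_t21] := eqVneq (t2 - t1) 0.
  have /subr0_eq tt1 : t - t1 = 0 by rewrite -t21 t_t2 t21 subrr mul0r.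
  by rewrite /GRing.comm {1}tt1 t1b.
case: nSb; rewrite -(mulKr (R_unit nz_t21) b) -t_t2.
by apply: (subalgM S_subalg); [apply: (subalgV S_subalg) |];
  apply: (subalgB S_subalg) => //; apply: S_conj.
Qed.

Lemma subalg_conj_central x : ~ S x -> central t.
Proof.
move=> nSx s; have [Ss | nSs] := classic (S s); last exact: subalg_conj_comm.
have nSxs : ~ S (x + s).
  by move=> Sxs; apply: nSx; rewrite -(addrK s x); apply: (subalgB S_subalg).
have := subalg_conj_comm nSxs; rewrite /GRing.comm mulrDr mulrDl (subalg_conj_comm nSx).
exact: addrI.
Qed.

End ProperSubalgebra.

Lemma central_of_centralZ (F : fieldType) (A : algType F) (c : F) (x : A) :
  c != 0 -> central (c *: x) -> central x.
Proof. by move=> nz_c cx y; apply: (scalerI nz_c); rewrite scalerAl cx -scalerAr. Qed.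

Section InfiniteField.
Variable F : fieldType.
Hypothesis F_infinite : forall s : seq F, exists c, c \notin s.

Lemma uniq_seq_of_size n : exists2 s : seq F, uniq s & size s = n.
Proof.
elim: n => [|n [s Us <-]]; first by exists [::].
by have [c s'c] := F_infinite s; exists (c :: s); rewrite /= ?s'c.
Qed.

Lemma poly_eq0_of_roots (P : {poly F}) : (forall c, P.[c] = 0) -> P = 0.
Proof.
move=> P0; apply/eqP; apply: contraT => nzP.
have [s Us Ss] := uniq_seq_of_size (size P).
have := max_poly_roots nzP _ Us; rewrite Ss ltnn; apply.
by apply/allP => c _; apply/rootP.
Qed.

Lemma power_combination_eq0 (V : vectType F) n (v : nat -> V) :
  (forall c : F, \sum_(i < n) c ^+ i *: v i = 0) -> forall i, (i < n)%N -> v i = 0.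
Proof.
move=> v0 i lt_in; rewrite (coord_vbasis (memvf (v i))); apply: big1 => j _.
pose P := \poly_(k < n) coord (vbasis fullv) j (v k).
suff /(congr1 (coefp i)) : P = 0.
  by rewrite /= coef_poly lt_in coef0 => ->; rewrite scale0r.
apply: poly_eq0_of_roots => c; rewrite horner_poly.
transitivity (coord (vbasis fullv) j (\sum_(k < n) c ^+ k *: v k)).
  by rewrite linear_sum; apply: eq_bigr => k _; rewrite linearZ /= mulrC.
by rewrite v0 linear0.
Qed.

Variable R : falgType F.

Lemma central_power_combination n (v : nat -> R) :
  (forall c : F, central (\sum_(i < n) c ^+ i *: v i)) ->
  forall i, (i < n)%N -> central (v i).
Proof.
move=> cv i lt_in w; apply/eqP; rewrite -subr_eq0; apply/eqP.
apply: (power_combination_eq0 (v := fun k => v k * w - w * v k)) lt_in => c.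
have := cv c w; rewrite /GRing.comm mulr_suml mulr_sumr => /eqP.
rewrite -subr_eq0 -sumrB => /eqP/(etrans _); apply; apply: eq_bigr => k _.
by rewrite scalerBr scalerAl scalerAr.
Qed.

Lemma central_power_of_central_peval (p : {poly F}) :
  (1 < size p)%N -> (forall y : R, central (peval p y)) ->
  forall y : R, central (y ^+ (size p).-1).
Proof.
move=> p_gt1 cp y; have nz_p : p != 0 by rewrite -size_poly_gt0 ltnW.
apply: (central_of_centralZ (_ : lead_coef p != 0)); first by rewrite lead_coef_eq0.
apply: (central_power_combination (n := size p) (v := fun i => p`_i *: y ^+ i)).
  move=> c /=; suff -> : \sum_(i < size p) c ^+ i *: (p`_i *: y ^+ i) = peval p (c *: y).
    exact: cp.
  by rewrite pevalE; apply: eq_bigr => i _; rewrite exprZn !scalerA mulrC.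
by rewrite prednK // ltnW.
Qed.

End InfiniteField.

Section FiniteScalars.
Variables (F : fieldType) (R : falgType F) (s : seq F).
Hypothesis s_full : forall c : F, c \in s.
Hypothesis R_unit : forall x : R, x != 0 -> x \is a GRing.unit.

Let full_finite (T : eqType) (e : seq T) : (forall x, x \in e) -> finite_axiom (undup e).
Proof. by move=> e_full x; rewrite count_uniq_mem ?undup_uniq // mem_undup e_full. Qed.

Let Ffin := fin_type (full_finite s_full).
Let enumR : seq R :=
  codom (fun r : 'rV[Ffin]_(\dim {:R}) => passmx.vecof (vbasis {:R}) r).

Let enumR_full x : x \in enumR.
Proof.
rewrite -(passmx.rVofK (vbasisP {:R}) x).
exact: (codom_f _ (passmx.rVof (vbasis {:R}) x : 'rV[Ffin]_(\dim {:R}))).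
Qed.

Let Rfin : Type := R.
HB.instance Definition _ := GRing.UnitRing.on Rfin.
HB.instance Definition _ :=
  isCountable.Build Rfin (fin_pickleK (f := full_finite enumR_full)).
HB.instance Definition _ := isFinite.Build Rfin (full_finite enumR_full).

Lemma finite_scalars_mulrC : commutative (@GRing.mul R).
Proof.
apply: (@finDomain_mulrC Rfin) => x y xy0; apply/norP => -[nz_x nz_y].
by move/eqP: nz_y; apply; rewrite -(mulKr (R_unit nz_x) y) xy0 mulr0.
Qed.

End FiniteScalars.

Lemma noncomm_division_infinite_scalars (F : fieldType) (R : falgType F) :
  (forall x : R, x != 0 -> x \is a GRing.unit) -> (exists x y : R, x * y != y * x) ->
  forall s : seq F, exists c, c \notin s.
Proof.
move=> R_unit [x [y nxy]] s; apply: NNPP => no_new_scalar; move: nxy.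
have s_full c : c \in s by apply/negPn/negP => s'c; apply: no_new_scalar; exists c.
by rewrite (finite_scalars_mulrC s_full R_unit) eqxx.
Qed.

Lemma exprDn_comm_binom0 (A : pzRingType) m (x y : A) :
  (0 < m)%N -> (forall i, (0 < i < m)%N -> 'C(m, i)%:R = 0 :> A) ->
  GRing.comm x y -> (x + y) ^+ m = x ^+ m + y ^+ m.
Proof.
case: m => // m _ binom0 cxy; rewrite exprDn_comm // big_ord_recr big_ord_recl /=.
rewrite subn0 subnn bin0 binn expr0 mulr1 mul1r !mulr1n big1 ?addr0 // => i _.
by rewrite /bump /= add1n -mulr_natr binom0 ?mulr0 //= ltnS ltn_ord.
Qed.

(* With [h := u x] one has [x h = (h + 1) x], hence [x h^m = (h^m + 1) x]. *)
Lemma commutator1_expr_noncomm (A : nzRingType) m (x u : A) :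
  (0 < m)%N -> (forall i, (0 < i < m)%N -> 'C(m, i)%:R = 0 :> A) ->
  x * u - u * x = 1 -> ~ GRing.comm ((u * x) ^+ m) x.
Proof.
move=> m_gt0 binom0 xu1 chx; set h := u * x.
have xh : x * h = (h + 1) * x by rewrite mulrA -xu1 addrC subrK.
have xhk k : x * h ^+ k = (h + 1) ^+ k * x.
  elim: k => [|k IHk]; first by rewrite !expr0 mulr1 mul1r.
  by rewrite !exprSr mulrA IHk -mulrA xh mulrA.
have x0 : x = 0.
  have : x * h ^+ m = h ^+ m * x + x.
    by rewrite xhk exprDn_comm_binom0 ?expr1n ?mulrDl ?mul1r //; apply: commr1.
  by rewrite chx -{1}[_ * _]addr0 => /addrI.
by move: xu1; rewrite x0 mul0r mulr0 subrr => /eqP; rewrite eq_sym oner_eq0.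
Qed.

Section InnerDerivation.
Variables (F : fieldType) (R : falgType F).
Import FalgLfun.

Definition ad (x : R) : 'End(R) := amull x - amulr x.

Lemma adE x z : ad x z = x * z - z * x.
Proof. by rewrite add_lfunE opp_lfunE !lfunE. Qed.

Lemma ad_exprSr x n z : (ad x ^+ n.+1) z = ad x ((ad x ^+ n) z).
Proof. by rewrite exprSr lfun_mulE. Qed.

Hypothesis R_unit : forall x : R, x != 0 -> x \is a GRing.unit.

(* If [c := ad_x^k y] is the last nonzero iterate, then [c] commutes with [x] and
   [u := c^-1 ad_x^(k-1) y] satisfies [x u - u x = 1]. *)
Lemma ad_nilpotent_commutator1 (x y : R) n :
  x * y != y * x -> (forall z, (ad x ^+ n) z = 0) -> exists u, x * u - u * x = 1.
Proof.
move=> nxy adn0; pose v k := (ad x ^+ k) y.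
have v1 : v 1%N != 0 by rewrite /v expr1 adE subr_eq0.
have v_le_n k : v k != 0 -> (k <= n)%N.
  move=> nz_vk; rewrite leqNgt; apply: contra nz_vk => /ltnW le_nk; apply/eqP.
  by rewrite /v -(subnK le_nk) exprD lfun_mulE adn0.
have [k nz_vk k_max] := ex_maxnP (ex_intro (fun k => v k != 0) 1%N v1) v_le_n.
have k_gt0 : (0 < k)%N := k_max 1%N v1.
have cx : GRing.comm x (v k).
  apply/eqP; rewrite -subr_eq0 -adE /v -ad_exprSr; apply: contraT => /k_max.
  by rewrite ltnn.
exists ((v k)^-1 * v k.-1); rewrite mulrA (commrV cx) -!mulrA -mulrBr -adE.
by rewrite /v -ad_exprSr prednK // mulVr // R_unit.
Qed.

Lemma amull_expr x n z : ((amull x : 'End(R)) ^+ n) z = x ^+ n * z.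
Proof.
elim: n z => [|n IHn] z; first by rewrite !expr0 id_lfunE mul1r.
by rewrite exprSr lfun_mulE IHn lfunE /= exprS mulrA.
Qed.

Lemma opp_amulr_expr x n z :
  ((- amulr x : 'End(R)) ^+ n) z = (-1) ^+ n *: (z * x ^+ n).
Proof.
elim: n z => [|n IHn] z; first by rewrite !expr0 id_lfunE scale1r mulr1.
rewrite exprS lfun_mulE IHn opp_lfunE lfunE /= mulNr -mulrA -exprS.
by rewrite scalerN [in RHS]exprS mulN1r scaleNr.
Qed.

Variable m : nat.
Hypothesis m_gt0 : (0 < m)%N.
Hypothesis binom0 : forall i, (0 < i < m)%N -> 'C(m, i)%:R = 0 :> F.

Lemma binom0_alg (A : lalgType F) i : (0 < i < m)%N -> 'C(m, i)%:R = 0 :> A.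
Proof. by move=> i_mid; rewrite -(scaler_nat _ (1 : A)) binom0 // scale0r. Qed.

Lemma ad_expr_binom0 x z : (ad x ^+ m) z = x ^+ m * z + (-1) ^+ m *: (z * x ^+ m).
Proof.
have comm_lr : GRing.comm (amull x) (- amulr x).
  by apply/lfunP => y; rewrite !lfun_mulE !opp_lfunE !lfunE /= mulrN mulrA.
rewrite /ad exprDn_comm_binom0 //; last exact: binom0_alg.
by rewrite lfunE /= amull_expr opp_amulr_expr.
Qed.

Lemma ad_nilpotent x : central (x ^+ m) -> forall z, (ad x ^+ m) z = 0.
Proof.
move=> cxm; have ad1 : (ad x ^+ m) 1 = 0.
  by case: m m_gt0 => // k _; rewrite exprS lfun_mulE adE mulr1 mul1r subrr linear0.
move=> z; rewrite ad_expr_binom0 -cxm scalerAl -mulrDl.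
by move: ad1; rewrite ad_expr_binom0 mulr1 mul1r => ->; rewrite mul0r.
Qed.

End InnerDerivation.

Section CentralPowers.
Variables (F : fieldType) (R : falgType F).
Hypothesis F_infinite : forall s : seq F, exists c, c \notin s.
Hypothesis R_unit : forall x : R, x != 0 -> x \is a GRing.unit.
Hypothesis R_noncomm : exists x y : R, x * y != y * x.

Lemma noncomm_no_central_power m : (0 < m)%N -> ~ (forall y : R, central (y ^+ m)).
Proof.
elim/ltn_ind: m => m IHm m_gt0 cm.
case: (boolP [exists i : 'I_m, (0 < i)%N && ('C(m, i)%:R != 0 :> F)]).
  case/existsP => i /andP[i_gt0 nz_bin]; apply: (IHm i (ltn_ord i) i_gt0) => y.
  apply: (central_of_centralZ nz_bin).
  apply: (central_power_combination F_infinite (n := m.+1)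
           (v := fun k => 'C(m, k)%:R *: y ^+ k)); last by rewrite ltnS ltnW.
  move=> c /=.
  suff -> : \sum_(k < m.+1) c ^+ k *: ('C(m, k)%:R *: y ^+ k) = (c *: y + 1) ^+ m.
    exact: cm.
  by rewrite exprD1n; apply: eq_bigr => k _; rewrite exprZn scaler_nat -scalerMnr.
move=> no_bin; have binom0 i : (0 < i < m)%N -> 'C(m, i)%:R = 0 :> F.
  case/andP=> i_gt0 lt_im; apply/eqP; apply: contraNT no_bin => nz_bin.
  by apply/existsP; exists (Ordinal lt_im); rewrite i_gt0 nz_bin.
have [x [y nxy]] := R_noncomm.
have [u xu1] := ad_nilpotent_commutator1 R_unit nxy (ad_nilpotent m_gt0 binom0 (cm x)).
by apply: (commutator1_expr_noncomm m_gt0 (binom0_alg binom0 R) xu1); apply: cm.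
Qed.

End CentralPowers.

Unset Implicit Arguments.
Set Strict Implicit.

Theorem theorem2p3 (F : fieldType) (R : falgType F)
  (hdiv : forall x : R, x != 0 -> x \is a GRing.unit)
  (hnc : exists x y : R, x * y != y * x)
  (p : {poly F}) (hp : (1 < size p)%N) :
  @generates_algebra F R (pcomm_set (R:=R) p).
Proof.
move=> S S_subalg S_T x; apply: NNPP => nSx.
have F_infinite := noncomm_division_infinite_scalars hdiv hnc.
have cT (t : R) : pcomm_set p t -> central t.
  move=> Tt; apply: (subalg_conj_central S_subalg hdiv _ nSx) => u Uu.
  exact/S_T/pcomm_set_conj.
have cP (y : R) : central (peval p y).
  by apply: (central_of_central_conj_diff hdiv) => b Ub; apply/cT/pcomm_set_peval_conj.
have deg_gt0 : (0 < (size p).-1)%N by rewrite ltn_predRL.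
apply: (noncomm_no_central_power F_infinite hdiv hnc deg_gt0).
exact/(central_power_of_central_peval F_infinite hp cP).
Qed.
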